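(* Let $(a_k)_{k\ge1}$ be an increasing sequence of positive integers such that $\lim_{k\to\infty}a_{k+1}/a_k=\eta>1$ for some transcendental number $\eta$, and let $m\in\mathbb N$. Then there exists $\ell\in\mathbb N$ such that, writing $$S_{1,\ell}(\omega)=\sum_{k=1}^{\ell}\cos(2\pi a_k\omega),\qquad S_{\ell+1,n}(\omega)=\sum_{k=\ell+1}^{n}\cos(2\pi a_k\omega)$$ (the latter being $0$ if $n\le\ell$), for all $u,v\in\mathbb N$ with $u+v\le m$ and all $n\in\mathbb N$ we have $$\mathbb E\big[S_{1,\ell}^u S_{\ell+1,n}^v\big]=\mathbb E\big[S_{1,\ell}^u\big]\,\mathbb E\big[S_{\ell+1,n}^v\big],$$ where expectation is with respect to Lebesgue measure on $\omega\in[0,1]$. *)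

From HB Require Import structures.
From mathcomp Require Import all_boot all_order all_algebra.
From mathcomp Require Import all_classical all_reals all_analysis.
Set Implicit Arguments. Unset Strict Implicit. Unset Printing Implicit Defensive.
Import Order.TTheory GRing.Theory Num.Theory.
Local Open Scope ring_scope.

Definition algebraic (R : realType) (x : R) : Prop :=
  exists p : {poly rat}, p != 0 /\ root (map_poly ratr p) x.

Definition transcendental (R : realType) (x : R) : Prop := ~ algebraic x.

Definition Sblock (R : realType) (a : nat -> nat) (i j : nat) (w : R) : R :=
  \sum_(i <= k < j.+1) cos (2 * pi * (a k)%:R * w).

From HB Require Import structures.
From mathcomp Require Import all_boot all_order all_algebra.
From mathcomp Require Import all_classical all_reals all_analysis.
From mathcomp Require Import ring lra zify.
Import Order.TTheory GRing.Theory Num.Theory.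
Import numFieldNormedType.Exports.
Local Open Scope ring_scope.
Local Open Scope classical_set_scope.

(* By the product-to-sum formula, S_{1,l}^u and S_{l+1,n}^v are cosine
   polynomials whose frequencies are sums of at most u (resp. v) terms +-a_k
   with k <= l (resp. k > l), and the mean over [0, 1] of a cosine polynomial
   is its constant coefficient.  Hence the expectation factorises as soon as
   no nonzero frequency of the second factor cancels a frequency of the first,
   i.e. as soon as every vanishing combination sum_k c_k a_k of weight
   sum_k |c_k| <= m has c_k = 0 for k > l.  This rigidity follows from a lower
   bound |sum_{k <= L} c_k a_k| >= del a_L (c_L <> 0, L large), proved by
   induction on the weight.  If a nonzero coefficient sits at some k < L - d,
   dropping it changes the sum by at most |c_k| a_k, which is small compared
   with a_L once eta^(d+1) is large.  Otherwise the sum is a_{L-d} times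
   approximately sum_j c_{L-d+j} eta^j: a nonzero integer polynomial in the
   transcendental eta with bounded coefficients, hence bounded away from 0. *)

Section CosinePolynomials.
Context {R : realType}.

Lemma sin2piz (z : int) : sin (2 * pi * z%:~R) = 0 :> R.
Proof.
have sin2pin n : sin (2 * pi * n%:R) = 0 :> R.
  by rewrite -[_ * _]add0r mulr_natr mulr_natl periodicn ?sin0 //; exact: sinD2pi.
case: z => n; first exact: sin2pin.
by rewrite NegzE rmorphN /= mulrN sinN sin2pin oppr0.
Qed.

Lemma continuous_cosM (k : R) : continuous (fun w : R => cos (k * w)).
Proof.
move=> x; apply: (continuous_comp (f := fun w => k * w)); last exact: continuous_cos.
by apply: cvgM; [exact: cvg_cst | exact: cvg_id].
Qed.

Lemma integral_cos2piz (z : int) :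
  (\int[@lebesgue_measure R]_(w in `[0%R, 1%R]) (cos (2 * pi * z%:~R * w))%:E
    = (z == 0)%:R%:E)%E.
Proof.
have [->|z0] := eqVneq z 0.
  under eq_integral do rewrite mulr0 mul0r cos0.
  rewrite integral_cst /=; last exact: measurable_itv.
  by rewrite lebesgue_measure_itv /= lte_fin ltr01 oppr0 adde0 mule1.
set k := 2 * pi * z%:~R.
have k0 : k != 0 by rewrite !mulf_neq0 ?intr_eq0 // gt_eqF // pi_gt0.
pose F w := k^-1 * sin (k * w).
have dF x : is_derive x (1 : R) F (cos (k * x)).
  have dkx := is_deriveZ k (is_derive_id x (1 : R)).
  apply: is_derive_eq (is_deriveZ k^-1 (is_derive1_comp (is_derive_sin _) dkx)) _.
  by rewrite /GRing.scale /= mulr1 mulrC -mulrA mulfV // mulr1.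
rewrite (@continuous_FTC2 _ (fun w => cos (k * w)) F) ?ltr01 //.
- by rewrite /F mulr1 mulr0 sin0 sin2piz mulr0 -EFinB subrr.
- by apply/continuous_subspaceT => x; exact: continuous_cosM.
- split.
  + by move=> x _; case: (dF x).
  + apply: cvg_at_right_filter; apply/differentiable_continuous/derivable1_diffP.
    by case: (dF 0).
  + apply: cvg_at_left_filter; apply/differentiable_continuous/derivable1_diffP.
    by case: (dF 1).
- by move=> x _; rewrite derive1E; case: (dF x) => _ ->.
Qed.

Definition cospoly (s : seq (R * int)) (w : R) : R :=
  \sum_(p <- s) p.1 * cos (2 * pi * p.2%:~R * w).

Definition cospoly_mean (s : seq (R * int)) : R :=
  \sum_(p <- s) p.1 * (p.2 == 0)%:R.

Lemma integral_cospoly s :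
  (\int[@lebesgue_measure R]_(w in `[0%R, 1%R]) (cospoly s w)%:E
    = (cospoly_mean s)%:E)%E.
Proof.
have int_cos (k : R) : lebesgue_measure.-integrable `[0%R, 1%R]
    (fun w => (cos (k * w))%:E).
  apply: (continuous_compact_integrable (f := fun w => cos (k * w))).
    exact: segment_compact.
  by apply/continuous_subspaceT => x; exact: continuous_cosM.
under eq_integral do rewrite -sumEFin (eq_bigr _ (fun p _ => EFinM _ _)).
rewrite integral_sum; last 2 first.
- exact: measurable_itv.
- by move=> p; apply: integrableZl.
rewrite /cospoly_mean -sumEFin; apply: eq_bigr => p _.
by rewrite integralZl ?integral_cos2piz -?EFinM //; exact: measurable_itv.
Qed.

(* Product-to-sum: cos x cos y = (cos (x + y) + cos (x - y)) / 2. *)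
Definition cospoly_mul (s t : seq (R * int)) : seq (R * int) :=
  [seq (p.1 * q.1 / 2, p.2 + q.2) | p <- s, q <- t] ++
  [seq (p.1 * q.1 / 2, p.2 - q.2) | p <- s, q <- t].

Lemma cospolyM s t w : cospoly (cospoly_mul s t) w = cospoly s w * cospoly t w.
Proof.
rewrite /cospoly big_cat !big_allpairs_dep /= mulr_suml -big_split /=.
apply: eq_bigr => p _; rewrite mulr_sumr -big_split /=; apply: eq_bigr => q _.
set x := 2 * pi * p.2%:~R * w; set y := 2 * pi * q.2%:~R * w.
have -> : 2 * pi * (p.2 + q.2)%:~R * w = x + y by rewrite /x /y rmorphD /=; ring.
have -> : 2 * pi * (p.2 - q.2)%:~R * w = x - y by rewrite /x /y rmorphB /=; ring.
by rewrite cosD cosB; field.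
Qed.

Lemma cospoly_meanM s t :
  {in s & t, forall p q, `|p.2| = `|q.2| -> q.2 = 0} ->
  cospoly_mean (cospoly_mul s t) = cospoly_mean s * cospoly_mean t.
Proof.
move=> no_cancel; rewrite /cospoly_mean big_cat !big_allpairs_dep /=.
rewrite mulr_suml -big_split /= !big_seq; apply: eq_bigr => p ps.
rewrite mulr_sumr -big_split /= !big_seq; apply: eq_bigr => q qt /=.
have [q0|q0] := eqVneq q.2 0; first by rewrite q0 oppr0 !addr0 mulr1; field.
have [pq|pq] := eqVneq (p.2 + q.2) 0.
  by case/eqP: q0; apply: (no_cancel p) => //; rewrite -(addr0_eq pq) normrN.
have [pq'|pq'] := eqVneq (p.2 - q.2) 0.
  by case/eqP: q0; apply: (no_cancel p) => //; rewrite (subr0_eq pq').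
by rewrite !mulr0 addr0.
Qed.

Lemma mem_cospoly_mul s t r : r \in cospoly_mul s t ->
  exists p q, [/\ p \in s, q \in t & r.2 = p.2 + q.2 \/ r.2 = p.2 - q.2].
Proof.
rewrite mem_cat => /orP[] /allpairsP[[p q] [ps qt ->]].
  by exists p, q; split => //; left.
by exists p, q; split => //; right.
Qed.

Definition cospoly_exp (s : seq (R * int)) (u : nat) : seq (R * int) :=
  iter u (cospoly_mul^~ s) [:: (1, 0)].

Lemma cospolyX s u w : cospoly (cospoly_exp s u) w = cospoly s w ^+ u.
Proof.
elim: u => [|u IHu]; first by rewrite /cospoly big_seq1 mulr0 mul0r cos0 mulr1.
by rewrite /cospoly_exp iterS cospolyM IHu exprSr.
Qed.

End CosinePolynomials.

Lemma big_ord_widen_idx (T : Type) (idx : T) (op : Monoid.law idx) n1 n2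
    (F : nat -> T) :
  (n1 <= n2)%N -> (forall k, (n1 <= k < n2)%N -> F k = idx) ->
  \big[op/idx]_(k < n2) F k = \big[op/idx]_(k < n1) F k.
Proof.
move=> n12 F0; rewrite -!(big_mkord xpredT) (big_cat_nat (leq0n n1) n12) /=.
rewrite [X in op _ X]big1_seq ?Monoid.mulm1 // => k /andP[_].
by rewrite mem_index_iota => /F0.
Qed.

Section IntegerCombinations.
Variable a : nat -> nat.

Definition comb_weight (c : nat -> int) (L : nat) : nat := \sum_(k < L.+1) `|c k|.

Definition comb_value (c : nat -> int) (L : nat) : int :=
  \sum_(k < L.+1) c k * (a k)%:Z.

(* The frequencies of S_{lo,hi}^u: sums of at most u terms +-a_k, lo <= k <= hi. *)
Definition bounded_comb (lo hi u : nat) (z : int) : Prop :=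
  exists c : nat -> int, [/\ forall k, c k != 0 -> (lo <= k <= hi)%N,
    (comb_weight c hi <= u)%N & z = comb_value c hi].

Lemma notin_supp_eq0 {lo hi : nat} {c : nat -> int} {k : nat} :
  (forall j, c j != 0 -> (lo <= j <= hi)%N) -> ~~ (lo <= k <= hi)%N -> c k = 0.
Proof. by move=> c_supp; apply: contraNeq => /c_supp. Qed.

Lemma comb_weight_ge c {L k} : (k <= L)%N -> (`|c k| <= comb_weight c L)%N.
Proof.
move=> kL; rewrite /comb_weight (bigD1 (Ordinal (kL : (k < L.+1)%N))) //=.
exact: leq_addr.
Qed.

Lemma comb_value_window c n d : (forall k, (k < n)%N -> c k = 0) ->
  comb_value c (n + d) = \sum_(j < d.+1) c (n + j)%N * (a (n + j))%:Z.
Proof.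
move=> c_low; rewrite /comb_value -addnS big_split_ord /= big1 ?add0r // => k _.
by rewrite c_low ?mul0r.
Qed.

Lemma comb_weight_update {c d L k} : (k <= L)%N -> (forall j, j != k -> d j = c j) ->
  (comb_weight d L + `|c k| = comb_weight c L + `|d k|)%N.
Proof.
move=> kL dc; rewrite /comb_weight (bigD1 (Ordinal (kL : (k < L.+1)%N))) //=.
rewrite [in RHS](bigD1 (Ordinal (kL : (k < L.+1)%N))) //=.
rewrite (eq_bigr (fun j : 'I_L.+1 => `|c j|%N)) => [|j jk]; last by rewrite dc.
lia.
Qed.

Lemma comb_value_update {c d L k} : (k <= L)%N -> (forall j, j != k -> d j = c j) ->
  comb_value d L = comb_value c L + (d k - c k) * (a k)%:Z.
Proof.
move=> kL dc; rewrite /comb_value (bigD1 (Ordinal (kL : (k < L.+1)%N))) //=.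
rewrite [in RHS](bigD1 (Ordinal (kL : (k < L.+1)%N))) //=.
rewrite (eq_bigr (fun j : 'I_L.+1 => c j * (a j)%:Z)) => [|j jk]; last by rewrite dc.
ring.
Qed.

Lemma comb_value_widen {c L N} : (L <= N)%N -> (forall k, (L < k <= N)%N -> c k = 0) ->
  comb_value c N = comb_value c L.
Proof.
move=> LN c0; apply: (@big_ord_widen_idx _ _ _ _ _ (fun k => c k * (a k)%:Z)) => // k.
by case/andP=> Lk kN; rewrite c0 ?mul0r ?Lk.
Qed.

Lemma comb_weight_widen {c L N} : (L <= N)%N -> (forall k, (L < k <= N)%N -> c k = 0) ->
  comb_weight c N = comb_weight c L.
Proof.
move=> LN c0; apply: (@big_ord_widen_idx _ _ _ _ _ (fun k => `|c k|%N)) => // k.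
by case/andP=> Lk kN; rewrite c0 ?Lk.
Qed.

Lemma comb_valueD c1 c2 L :
  comb_value (fun k => c1 k + c2 k) L = comb_value c1 L + comb_value c2 L.
Proof. by rewrite /comb_value -big_split; apply: eq_bigr => k _; rewrite mulrDl. Qed.

Lemma leq_comb_weightD (c1 c2 : nat -> int) L :
  (comb_weight (fun k => c1 k + c2 k)%R L <= comb_weight c1 L + comb_weight c2 L)%N.
Proof. by rewrite /comb_weight -big_split; apply: leq_sum => k _ /=; lia. Qed.

Lemma bounded_comb0 lo hi : bounded_comb lo hi 0 0.
Proof. by exists (fun=> 0); split; rewrite // /comb_weight /comb_value ?big1. Qed.

Lemma bounded_combN lo hi u z : bounded_comb lo hi u z -> bounded_comb lo hi u (- z).
Proof.
move=> [c [c_supp c_wt ->]]; exists (fun k => - c k); split.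
- by move=> k; rewrite oppr_eq0; apply: c_supp.
- by rewrite /comb_weight; under eq_bigr do rewrite abszN.
- by rewrite /comb_value -sumrN; apply: eq_bigr => k _; rewrite mulNr.
Qed.

Lemma bounded_combS {lo hi u z k} (e : int) : `|e|%N = 1%N -> (lo <= k <= hi)%N ->
  bounded_comb lo hi u z -> bounded_comb lo hi u.+1 (z + e * (a k)%:Z).
Proof.
move=> e1 /andP[lok khi] [c [c_supp c_wt ->]].
pose d j := if j == k then c j + e else c j.
have dc j : j != k -> d j = c j by move=> /negbTE jk; rewrite /d jk.
exists d; split.
- move=> j; rewrite /d; have [->|_] := eqVneq j k; [by rewrite lok khi | exact: c_supp].
- have := comb_weight_update khi dc; rewrite /d eqxx; lia.
- by rewrite (comb_value_update khi dc) /d eqxx addrAC subrr add0r.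
Qed.

End IntegerCombinations.

Section Blocks.
Context {R : realType} (a : nat -> nat).

Definition cos_block (lo hi : nat) : seq (R * int) :=
  [seq (1, (a k)%:Z) | k <- index_iota lo hi.+1].

Lemma Sblock_cospoly lo hi w : Sblock a lo hi w = cospoly (cos_block lo hi) w.
Proof.
rewrite /Sblock /cospoly big_map; apply: eq_bigr => k _ /=.
by rewrite mul1r -pmulrn.
Qed.

Lemma cos_block_freq {lo hi u} {r : R * int} : r \in cospoly_exp (cos_block lo hi) u ->
  bounded_comb a lo hi u r.2.
Proof.
elim: u r => [|u IHu] r /=; first by rewrite inE => /eqP ->; exact: bounded_comb0.
case/mem_cospoly_mul => p [q [/IHu p_comb /mapP[k]]].
rewrite mem_index_iota ltnS => k_range -> [] ->.
  by have := bounded_combS a 1 erefl k_range p_comb; rewrite mul1r.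
by have := bounded_combS a (-1) erefl k_range p_comb; rewrite mulN1r.
Qed.

End Blocks.

Lemma exprn_unbounded {R : archiRealFieldType} {x : R} :
  1 < x -> forall M, exists n, M < x ^+ n.
Proof.
move=> x_gt1 M; have x1_gt0 : 0 < x - 1 by rewrite subr_gt0.
have bernoulli n : 1 + n%:R * (x - 1) <= x ^+ n.
  elim: n => [|n IHn]; first by rewrite mul0r addr0.
  have : x * (1 + n%:R * (x - 1)) <= x * x ^+ n by rewrite ler_pM2l ?(lt_trans ltr01).
  have := mulr_ge0 (mulr_ge0 (ler0n R n) (ltW x1_gt0)) (ltW x1_gt0).
  rewrite exprS -natr1; nra.
have /archi_boundP := divr_ge0 (normr_ge0 M) (ltW x1_gt0).
set n := Num.bound _ => Mn; exists n; apply: lt_le_trans (bernoulli n).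
rewrite ltr_pdivrMr // in Mn; have := ler_norm M; lra.
Qed.

Section LacunarySequence.
Context {R : realType} {a : nat -> nat} {eta : R}.
Hypothesis a_pos : forall k, (1 <= k)%N -> (0 < a k)%N.
Hypothesis a_incr : forall k, (1 <= k)%N -> (a k < a k.+1)%N.
Hypothesis a_ratio : (fun k : nat => ((a k.+1)%:R / (a k)%:R : R)) @ \oo --> eta.
Hypothesis eta_gt1 : 1 < eta.
Hypothesis eta_transcendental : transcendental eta.

Lemma a_gt0 k : (1 <= k)%N -> 0 < (a k)%:R :> R.
Proof. by move=> k1; rewrite ltr0n a_pos. Qed.

Lemma a_nondecr i j : (1 <= i)%N -> (i <= j)%N -> (a i <= a j)%N.
Proof.
move=> i1; elim: j => [|j IHj]; first by rewrite leqn0 => /eqP i0; rewrite i0 in i1.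
rewrite leq_eqVlt ltnS => /orP[/eqP-> // | ij].
exact: leq_trans (IHj ij) (ltnW (a_incr j (leq_trans i1 ij))).
Qed.

Lemma ratio_shift_cvg j :
  (fun n => (a (n + j))%:R / (a n)%:R : R) @ \oo --> eta ^+ j.
Proof.
elim: j => [|j IHj].
  apply: cvg_near_cst; near=> n; rewrite addn0 divff // gt_eqF // a_gt0 //.
  by near: n; exists 1%N.
have shifted : (fun n => (a (n + j).+1)%:R / (a (n + j))%:R : R) @ \oo --> eta.
  by rewrite (cvg_shiftn j (fun k => (a k.+1)%:R / (a k)%:R : R)).
have prod_cvg := cvgM shifted IHj.
rewrite exprS; apply: (cvg_trans _ (prod_cvg _)).
apply: near_eq_cvg; near=> n; rewrite /= addnS mulrA divfK // gt_eqF // a_gt0 //.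
by near: n; exists 1%N => // n /= n1; exact: leq_trans n1 (leq_addr _ _).
Unshelve. all: by end_near.
Qed.

Lemma ratio_shift_near D {eps : R} : 0 < eps ->
  \forall n \near \oo, forall j, (j <= D)%N ->
    `|(a (n + j))%:R / (a n)%:R - eta ^+ j| < eps.
Proof.
move=> eps_gt0.
have /filter_forall : forall j : 'I_D.+1, \forall n \near \oo,
    `|eta ^+ j - (a (n + j))%:R / (a n)%:R| < eps.
  by move=> j; exact: (cvgrPdist_lt _ _).1 (ratio_shift_cvg j) _ eps_gt0.
apply: filterS => n near_n j jD.
by have := near_n (Ordinal (jD : (j < D.+1)%N)); rewrite distrC.
Qed.

Lemma transcendental_sum_neq0 d (E : nat -> int) : E d != 0 ->
  \sum_(j < d.+1) (E j)%:~R * eta ^+ j != 0.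
Proof.
move=> Ed; apply/eqP => sum0; apply: eta_transcendental.
exists (\poly_(j < d.+1) (E j)%:~R); split.
  by rewrite -lead_coef_eq0 lead_coef_poly ?intr_eq0.
have -> : map_poly ratr (\poly_(j < d.+1) (E j)%:~R) = \poly_(j < d.+1) ((E j)%:~R : R).
  apply/polyP => j; rewrite coef_map !coef_poly.
  by case: ifP => _; [exact: ratr_int | exact: raddf0].
by rewrite /root horner_poly sum0.
Qed.

Lemma transcendental_sum_lower_bound K d : exists2 del : R, 0 < del &
  forall E : nat -> int, (forall j, (j <= d)%N -> (`|E j| <= K)%N) -> E d != 0 ->
    del <= `|\sum_(j < d.+1) (E j)%:~R * eta ^+ j|.
Proof.
(* The finitely many coefficient vectors in [-K, K]^(d+1) are encoded as t j - K. *)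
pose coefs (t : {ffun 'I_d.+1 -> 'I_(K + K).+1}) (j : nat) : int :=
  (t (inord j))%:Z - K%:Z.
pose f t := `|\sum_(j < d.+1) (coefs t j)%:~R * eta ^+ j|.
exists (\big[Order.min/1]_(t | coefs t d != 0) f t).
  apply/bigmin_gtP; split => // t td; rewrite normr_gt0.
  exact: transcendental_sum_neq0.
move=> E E_le Ed.
pose t : {ffun 'I_d.+1 -> 'I_(K + K).+1} :=
  [ffun j : 'I_d.+1 => inord (absz (E j + K%:Z))].
have coefsE j : (j <= d)%N -> coefs t j = E j.
  by move=> jd; have Ej := E_le j jd; rewrite /coefs ffunE !inordK; lia.
have -> : \sum_(j < d.+1) (E j)%:~R * eta ^+ j
    = \sum_(j < d.+1) (coefs t j)%:~R * eta ^+ j.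
  by apply: eq_bigr => j _; rewrite coefsE // -ltnS.
by apply: bigmin_le_cond; rewrite coefsE.
Qed.

Lemma ratio_comb_approx (E : nat -> int) n d K (eps : R) :
  (forall j, (j <= d)%N -> `|(a (n + j))%:R / (a n)%:R - eta ^+ j| < eps) ->
  (forall j, (j <= d)%N -> (`|E j| <= K)%N) ->
  `|\sum_(j < d.+1) (E j)%:~R * ((a (n + j))%:R / (a n)%:R)
    - \sum_(j < d.+1) (E j)%:~R * eta ^+ j| <= (d.+1 * K)%:R * eps.
Proof.
move=> ratio_near E_le; rewrite -sumrB; apply: le_trans (ler_norm_sum _ _ _) _.
have -> : (d.+1 * K)%:R * eps = \sum_(j < d.+1) K%:R * eps.
  by rewrite sumr_const card_ord natrM -mulrA mulr_natl.
apply: ler_sum => j _; have jd : (j <= d)%N := ltn_ord j.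
rewrite -mulrBr normrM -intr_norm -natr_absz.
by apply: ler_pM; rewrite ?ler0n ?normr_ge0 ?ler_nat ?E_le ?ltW ?ratio_near.
Qed.

Lemma window_lower_bound K d : exists N, exists2 del : R, 0 < del &
  forall L c, (N + d <= L)%N -> (forall k, (k + d < L)%N -> c k = 0) ->
  c L != 0 -> (comb_weight c L <= K)%N ->
  del * (a L)%:R <= `|(comb_value a c L)%:~R|.
Proof.
have [ds ds_gt0 ds_le] := transcendental_sum_lower_bound K d.
pose M : R := (d.+1 * K)%:R.
have M_ge0 : 0 <= M by [].
pose eps := Num.min 1 (ds / (2 * (M + 1))).
have eps_gt0 : 0 < eps by rewrite lt_min ltr01 /= divr_gt0 // mulr_gt0 // ltr_wpDl.
have [N0 _ ratio_near] := ratio_shift_near d eps_gt0.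
have etad_gt0 : 0 < eta ^+ d + 1.
  by rewrite addr_gt0 // exprn_gt0 // (lt_trans ltr01 eta_gt1).
exists N0.+1, (ds / (2 * (eta ^+ d + 1))); first by rewrite divr_gt0 ?mulr_gt0.
move=> L c NL c_low cL c_wt.
set n := (L - d)%N; have Lnd : L = (n + d)%N by rewrite /n; lia.
have n_gt : (N0 < n)%N by rewrite /n; lia.
have an_gt0 : 0 < (a n)%:R :> R by apply: a_gt0; lia.
have c_le j : (j <= d)%N -> (`|c (n + j)%N| <= K)%N.
  by move=> jd; apply: leq_trans c_wt; apply: comb_weight_ge; lia.
pose W : R := \sum_(j < d.+1) (c (n + j)%N)%:~R * ((a (n + j))%:R / (a n)%:R).
pose V : R := \sum_(j < d.+1) (c (n + j)%N)%:~R * eta ^+ j.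
have valueE : (comb_value a c L)%:~R = (a n)%:R * W.
  rewrite Lnd comb_value_window => [|k kn]; last by apply: c_low; lia.
  rewrite rmorph_sum mulr_sumr; apply: eq_bigr => j _.
  by rewrite rmorphM /= -pmulrn mulrCA [_ * (_ / _)]mulrC divfK ?gt_eqF.
have V_ge : ds <= `|V| by apply: (ds_le (fun j => c (n + j)%N)); rewrite -?Lnd.
have WV : `|W - V| <= M * eps.
  apply: (ratio_comb_approx (fun j => c (n + j)%N)) => // j jd.
  exact: ratio_near (ltnW n_gt) _ jd.
have Meps : M * eps <= ds / 2.
  have : eps <= ds / (2 * (M + 1)) by rewrite ge_min lexx orbT.
  rewrite ler_pdivlMr ?mulr_gt0 ?ltr_wpDl // => h; nra.
have W_ge : ds / 2 <= `|W|.
  by have := ler_normD (V - W) W; rewrite subrK distrC; lra.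
have aL_le : (a L)%:R <= (eta ^+ d + 1) * (a n)%:R.
  have := ratio_near n (ltnW n_gt) d (leqnn d); rewrite -Lnd ltr_distl.
  case/andP => _; rewrite ltr_pdivrMr // => /ltW /le_trans; apply.
  by rewrite ler_wpM2r ?(ltW an_gt0) // lerD2l ge_min lexx.
rewrite valueE normrM (gtr0_norm an_gt0).
apply: le_trans (ler_wpM2l _ aL_le) _; first by rewrite divr_ge0 ?mulr_ge0 ?ltW.
have -> : ds / (2 * (eta ^+ d + 1)) * ((eta ^+ d + 1) * (a n)%:R) = ds / 2 * (a n)%:R.
  by field; rewrite gt_eqF.
by rewrite mulrC ler_wpM2l ?(ltW an_gt0).
Qed.

Lemma far_lower_bound {w l0 : nat} {del0 : R} {d : nat} : 0 < del0 ->
  4 * w.+1%:R / del0 < eta ^+ d.+1 ->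
  (forall L c, (l0 < L)%N -> c 0%N = 0 -> c L != 0 -> (comb_weight c L <= w)%N ->
    del0 * (a L)%:R <= `|(comb_value a c L)%:~R|) ->
  exists N, forall L c k, (N <= L)%N -> c 0%N = 0 -> c L != 0 ->
    (comb_weight c L <= w.+1)%N -> (1 <= k)%N -> (k + d < L)%N -> c k != 0 ->
    del0 / 2 * (a L)%:R <= `|(comb_value a c L)%:~R|.
Proof.
move=> del0_gt0 eta_big lower_w.
have half_gt0 : (0 : R) < 1 / 2 by rewrite divr_gt0.
have [N0 _ ratio_near] := ratio_shift_near d.+1 half_gt0.
exists (maxn l0.+1 (N0 + d.+1)) => L c k; rewrite geq_max => /andP[l0L N0L].
move=> c0 cL c_wt k1 kdL ck; have kL : (k <= L)%N by lia.
pose c' j := if j == k then 0 else c j.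
have c'c j : j != k -> c' j = c j by move=> /negbTE jk; rewrite /c' jk.
have c'k : c' k = 0 by rewrite /c' eqxx.
have wt_drop := comb_weight_update kL c'c; rewrite c'k addn0 in wt_drop.
have value_drop := comb_value_update a kL c'c; rewrite c'k sub0r mulNr in value_drop.
have lower_c' : del0 * (a L)%:R <= `|(comb_value a c' L)%:~R|.
  apply: lower_w => //; [by rewrite c'c ?c0 //; lia | by rewrite c'c //; lia |].
  have : (0 < `|c k|)%N by rewrite absz_gt0.
  lia.
set n := (L - d.+1)%N; have Ln : L = (n + d.+1)%N by rewrite /n; lia.
have an_gt0 : 0 < (a n)%:R :> R by apply: a_gt0; lia.
have ak_le : (a k)%:R <= (a n)%:R :> R by rewrite ler_nat; apply: a_nondecr; lia.
have ck_le : (`|c k|%N)%:R <= w.+1%:R :> R.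
  by rewrite ler_nat; apply: leq_trans c_wt; exact: comb_weight_ge.
have e_ge1 : 1 <= eta ^+ d.+1 by rewrite exprn_ege1 ?ltW.
have aL_ge : eta ^+ d.+1 / 2 * (a n)%:R <= (a L)%:R.
  have n_ge : (N0 <= n)%N by rewrite /n; lia.
  have := ratio_near n n_ge d.+1 (leqnn _); rewrite -Ln ltr_distl => /andP[lo _].
  rewrite ltr_pdivlMr // in lo; apply/ltW/(le_lt_trans _ lo).
  by rewrite ler_wpM2r ?(ltW an_gt0) //; lra.
have far_term : `|(c k * (a k)%:Z)%:~R| <= del0 / 2 * (a L)%:R.
  rewrite rmorphM /= normrM -intr_norm -natr_absz -pmulrn !normr_nat.
  apply: le_trans (ler_pM _ _ ck_le ak_le) _ => //.
  rewrite ltr_pdivrMr // in eta_big.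
  have := ler_wpM2r (ltW an_gt0) (ltW eta_big).
  have := ler_wpM2l (ltW del0_gt0) aL_ge.
  lra.
have -> : comb_value a c L = comb_value a c' L + c k * (a k)%:Z.
  by rewrite value_drop addrNK.
rewrite rmorphD /=; apply: le_trans (lerB_normD _ _).
by apply: le_trans (lerB lower_c' far_term); lra.
Qed.

(* Index 0 is excluded since nothing is assumed about a_0. *)
Lemma comb_value_lower_bound w : exists l, exists2 del : R, 0 < del &
  forall L c, (l < L)%N -> c 0%N = 0 -> c L != 0 -> (comb_weight c L <= w)%N ->
    del * (a L)%:R <= `|(comb_value a c L)%:~R|.
Proof.
elim: w => [|w [l0 [del0 del0_gt0 lower_w]]].
  exists 0%N, 1 => // L c _ _ cL /(leq_trans (comb_weight_ge c (leqnn L))).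
  by rewrite leqn0 absz_eq0 (negbTE cL).
have [d eta_big] : exists d, 4 * w.+1%:R / del0 < eta ^+ d.+1.
  have [d d_big] := exprn_unbounded eta_gt1 (4 * w.+1%:R / del0).
  by exists d; apply: lt_le_trans d_big (ler_weXn2l (ltW eta_gt1) (leqnSn d)).
have [N1 [del1 del1_gt0 window]] := window_lower_bound w.+1 d.
have [N2 far] := far_lower_bound del0_gt0 eta_big lower_w.
exists (maxn (N1 + d) N2), (Num.min (del0 / 2) del1).
  by rewrite lt_min del1_gt0 divr_gt0.
move=> L c; rewrite gtn_max => /andP[N1L N2L] c0 cL c_wt.
have [[k [k1 kdL ck]] | no_far] :=
  pselect (exists k, [/\ 1 <= k, k + d < L & c k != 0]%N).
  apply: le_trans (far L c k (ltnW N2L) c0 cL c_wt k1 kdL ck).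
  by rewrite ler_wpM2r // ge_min lexx.
have c_low k : (k + d < L)%N -> c k = 0.
  case: k => [|k] kdL; first exact: c0.
  by apply/eqP/negPn/negP => ck; apply: no_far; exists k.+1.
apply: le_trans (window L c (ltnW N1L) c_low cL c_wt).
by rewrite ler_wpM2r // ge_min lexx orbT.
Qed.

Lemma comb_rigidity m : exists2 l, (1 <= l)%N &
  forall N c, (forall k, c k != 0 -> (1 <= k <= N)%N) -> (comb_weight c N <= m)%N ->
  comb_value a c N = 0 -> forall k, (l < k)%N -> c k = 0.
Proof.
have [l [del del_gt0 lower]] := comb_value_lower_bound m.
exists l.+1 => // N c c_supp c_wt c_val k lk; apply/eqP/negPn/negP => ck.
have c_le i : c i != 0 -> (i <= N)%N by case/c_supp/andP.
have [L cL L_max] := ex_maxnP (ex_intro (fun i => c i != 0) k ck) c_le.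
have LN : (L <= N)%N by exact: c_le.
have c_above i : (L < i <= N)%N -> c i = 0.
  by case/andP=> Li _; apply/eqP/negPn/negP => /L_max; rewrite leqNgt Li.
have kL : (k <= L)%N := L_max k ck.
have c0 : c 0%N = 0 by apply/eqP/negPn/negP => /c_supp.
have wtL : (comb_weight c L <= m)%N by rewrite -(comb_weight_widen LN c_above).
have lL : (l < L)%N by lia.
have := lower L c lL c0 cL wtL; rewrite -(comb_value_widen a LN c_above) c_val normr0.
by rewrite leNgt mulr_gt0 ?a_gt0 //; lia.
Qed.

Lemma bounded_comb_split m : exists2 l, (1 <= l)%N &
  forall u v n z y, (u + v <= m)%N -> bounded_comb a 1 l u z ->
  bounded_comb a l.+1 n v y -> z + y = 0 -> y = 0.
Proof.
have [l l_gt0 rigid] := comb_rigidity m.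
exists l => // u v n _ _ uvm [c1 [supp1 wt1 ->]] [c2 [supp2 wt2 ->]] zy.
pose N := maxn l n; have lN : (l <= N)%N := leq_maxl l n.
have nN : (n <= N)%N := leq_maxr l n.
have c1_out k : ~~ (1 <= k <= l)%N -> c1 k = 0 := notin_supp_eq0 supp1.
have c2_out k : ~~ (l < k <= n)%N -> c2 k = 0 := notin_supp_eq0 supp2.
have c1_above k : (l < k <= N)%N -> c1 k = 0 by move=> ?; apply: c1_out; lia.
have c2_above k : (n < k <= N)%N -> c2 k = 0 by move=> ?; apply: c2_out; lia.
have c_vanish : forall k, (l < k)%N -> c1 k + c2 k = 0.
  apply: (rigid N).
  - move=> k; apply: contraR => k_out; rewrite c1_out ?c2_out ?addr0 //; lia.
  - have := leq_comb_weightD c1 c2 N.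
    rewrite (comb_weight_widen lN c1_above) (comb_weight_widen nN c2_above); lia.
  - rewrite comb_valueD (comb_value_widen a lN c1_above).
    by rewrite (comb_value_widen a nN c2_above).
have c2_vanish k : c2 k = 0.
  have [kl | lk] := leqP k l; first by apply: c2_out; lia.
  by have := c_vanish k lk; rewrite c1_out ?add0r //; lia.
by rewrite /comb_value big1 // => k _; rewrite c2_vanish mul0r.
Qed.

End LacunarySequence.

Theorem lemma2p2 (R : realType) (a : nat -> nat) (eta : R) (m : nat) :
  (forall k, (1 <= k)%N -> (0 < a k)%N) ->
  (forall k, (1 <= k)%N -> (a k < a k.+1)%N) ->
  (fun k : nat => ((a k.+1)%:R / (a k)%:R : R)) @ \oo --> eta ->
  1 < eta ->
  transcendental eta ->
  exists l : nat, (1 <= l)%N /\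
    forall u v n : nat, (u + v <= m)%N ->
      (\int[@lebesgue_measure R]_(w in `[0%R, 1%R])
          ((Sblock a 1 l w) ^+ u * (Sblock a l.+1 n w) ^+ v)%:E
       = (\int[@lebesgue_measure R]_(w in `[0%R, 1%R]) ((Sblock a 1 l w) ^+ u)%:E)
         * (\int[@lebesgue_measure R]_(w in `[0%R, 1%R]) ((Sblock a l.+1 n w) ^+ v)%:E))%E.
Proof.
move=> a_pos a_incr a_ratio eta_gt1 eta_tr.
have [l l_gt0 comb_split] := bounded_comb_split a_pos a_incr a_ratio eta_gt1 eta_tr m.
exists l; split => // u v n uvm.
pose s : seq (R * int) := cospoly_exp (cos_block a 1 l) u.
pose t : seq (R * int) := cospoly_exp (cos_block a l.+1 n) v.
have sE w : Sblock a 1 l w ^+ u = cospoly s w by rewrite Sblock_cospoly cospolyX.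
have tE w : Sblock a l.+1 n w ^+ v = cospoly t w by rewrite Sblock_cospoly cospolyX.
under eq_integral do rewrite sE tE -cospolyM.
under [X in (_ * X)%E]eq_integral do rewrite tE.
under [X in (X * _)%E]eq_integral do rewrite sE.
rewrite !integral_cospoly -EFinM cospoly_meanM // => p q.
move=> /(cos_block_freq a) p_comb /(cos_block_freq a) q_comb.
have no_cancel := comb_split u v n p.2 _ uvm p_comb.
move/eqP; rewrite eqr_norm2 => /orP[] /eqP pq.
  apply/eqP; rewrite -oppr_eq0; apply/eqP/no_cancel; first exact: bounded_combN.
  by rewrite pq subrr.
by apply: no_cancel q_comb _; rewrite pq addNr.
Qed.
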